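(* Let $G$ be a cactus on $n$ vertices with circumference $l$, $3\le l\le n-1$, and Wiener index $W$. Let $C_1,\dots,C_k$ be all the cycles of length $l$, $s_i=\sum_{v_j\in V(C_i)}D_j$, and let $a_i=l^{3}n+4ns_i-16l(s_i-W)$, $b_i=4l^{3}W-16s_i(s_i-W)$ if $l$ is even, and $a_i=l^{3}n+4ns_i-ln-16l(s_i-W)$, $b_i=4(l^{3}-l)W-16s_i(s_i-W)$ if $l$ is odd ($1\le i\le k$). Then (1) $\displaystyle q^{\mathcal{D}}(G)\ge \max_{1\le i\le k}\frac{a_i+\sqrt{a_i^{2}-16b_il(n-l)}}{8l(n-l)}$; (2) $\displaystyle q^{\mathcal{D}}_{min}(G)\le \min_{1\le i\le k}\frac{a_i-\sqrt{a_i^{2}-16b_il(n-l)}}{8l(n-l)}$.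
   Context: $G$ has vertex set $\{v_1,\dots,v_n\}$; $d_G$ is the graph distance; $\mathcal{D}(G)=(d_G(v_i,v_j))$. $D_j=\sum_{m\ne j}d_G(v_j,v_m)$, $Tr(G)=\mathrm{diag}(D_1,\dots,D_n)$, $\mathcal{Q}(G)=Tr(G)+\mathcal{D}(G)$. $W=\sum_{i<j}d_G(v_i,v_j)$. A cactus is a connected graph in which any two cycles share at most one vertex; the circumference is the length of a longest cycle. $q^{\mathcal{D}}(G)$, $q^{\mathcal{D}}_{min}(G)$ are the largest and least eigenvalues of $\mathcal{Q}(G)$. *)

From HB Require Import structures.
From mathcomp Require Import all_boot all_order all_algebra.
From mathcomp Require Import reals.
Set Implicit Arguments. Unset Strict Implicit. Unset Printing Implicit Defensive.
Import Order.TTheory GRing.Theory Num.Theory.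

Definition simple_graph (n : nat) (e : rel 'I_n) : Prop :=
  symmetric e /\ irreflexive e.

Definition connected_graph (n : nat) (e : rel 'I_n) : Prop :=
  forall u v, connect e u v.

Definition walk_of_len (n : nat) (e : rel 'I_n) (k : nat) (u v : 'I_n) : bool :=
  [exists p : k.-tuple 'I_n, path e u p && (last u p == v)].

(* graph distance d_G(u,v): least k with a walk of length k from u to v
   (for a connected graph on n vertices this is < n, hence found in iota 0 n) *)
Definition gdist (n : nat) (e : rel 'I_n) (u v : 'I_n) : nat :=
  find (fun k => walk_of_len e k u v) (iota 0 n).

Definition is_cycle (n : nat) (e : rel 'I_n) (c : seq 'I_n) : bool :=
  [&& 3 <= size c, uniq c & cycle e c].

(* the (oriented, both directions) edge set of a cycle: identifies the cycle
   as a subgraph independently of starting point and orientation *)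
Definition cycle_edges (n : nat) (c : seq 'I_n) : {set 'I_n * 'I_n} :=
  [set p | (p.1 \in c) && ((p.2 == next c p.1) || (p.2 == prev c p.1))].

Definition cactus (n : nat) (e : rel 'I_n) : Prop :=
  [/\ simple_graph e, connected_graph e &
    forall c1 c2, is_cycle e c1 -> is_cycle e c2 ->
      cycle_edges c1 != cycle_edges c2 ->
      #|[set x | (x \in c1) && (x \in c2)]| <= 1].

Definition circumference (n : nat) (e : rel 'I_n) (l : nat) : Prop :=
  (exists c, is_cycle e c /\ size c = l) /\
  (forall c, is_cycle e c -> size c <= l).

Definition transmission (n : nat) (e : rel 'I_n) (j : 'I_n) : nat :=
  \sum_(m < n | m != j) gdist e j m.

Definition wiener (n : nat) (e : rel 'I_n) : nat :=
  \sum_(i < n) \sum_(j < n | i < j) gdist e i j.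

Local Open Scope ring_scope.

Definition dist_mx (R : realType) (n : nat) (e : rel 'I_n) : 'M[R]_n :=
  \matrix_(i, j) (gdist e i j)%:R.

Definition trans_mx (R : realType) (n : nat) (e : rel 'I_n) : 'M[R]_n :=
  diag_mx (\row_j (transmission e j)%:R).

Definition distQ (R : realType) (n : nat) (e : rel 'I_n) : 'M[R]_n :=
  trans_mx R e + dist_mx R e.

Definition is_largest_eigenvalue (R : realType) (n : nat) (A : 'M[R]_n) (q : R) : Prop :=
  eigenvalue A q /\ forall a, eigenvalue A a -> a <= q.

Definition is_least_eigenvalue (R : realType) (n : nat) (A : 'M[R]_n) (q : R) : Prop :=
  eigenvalue A q /\ forall a, eigenvalue A a -> q <= a.

Definition cyc_s (R : realType) (n : nat) (e : rel 'I_n) (c : seq 'I_n) : R :=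
  \sum_(v <- c) (transmission e v)%:R.

Definition coef_a (R : realType) (n : nat) (e : rel 'I_n) (l : nat) (c : seq 'I_n) : R :=
  let s := cyc_s R e c in let W : R := (wiener e)%:R in
  let L : R := l%:R in let N : R := n%:R in
  if ~~ odd l then L ^+ 3 * N + 4 * N * s - 16 * L * (s - W)
  else L ^+ 3 * N + 4 * N * s - L * N - 16 * L * (s - W).

Definition coef_b (R : realType) (n : nat) (e : rel 'I_n) (l : nat) (c : seq 'I_n) : R :=
  let s := cyc_s R e c in let W : R := (wiener e)%:R in
  let L : R := l%:R in
  if ~~ odd l then 4 * L ^+ 3 * W - 16 * s * (s - W)
  else 4 * (L ^+ 3 - L) * W - 16 * s * (s - W).

Definition bound_plus (R : realType) (n : nat) (e : rel 'I_n) (l : nat) (c : seq 'I_n) : R :=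
  let a := coef_a R e l c in let b := coef_b R e l c in
  (a + Num.sqrt (a ^+ 2 - 16 * b * l%:R * (n - l)%:R)) / (8 * l%:R * (n - l)%:R).

Definition bound_minus (R : realType) (n : nat) (e : rel 'I_n) (l : nat) (c : seq 'I_n) : R :=
  let a := coef_a R e l c in let b := coef_b R e l c in
  (a - Num.sqrt (a ^+ 2 - 16 * b * l%:R * (n - l)%:R)) / (8 * l%:R * (n - l)%:R).

(* Test the distance signless Laplacian Q on the vectors x equal to α on a
   cycle C of length l and to β elsewhere.  With s the transmission sum of C, X
   the sum of the distances inside C and W the Wiener index,
   x Q x^T = α^2 (s + X) + 2 α β (s - X) + β^2 (4W - 3s + X) and
   x x^T = α^2 l + β^2 (n - l).  By the Rayleigh principle, for q the largest
   (least) eigenvalue the binary form q x x^T - x Q x^T (its opposite) is positive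
   semidefinite, so q lies above the larger (below the smaller) root of
   4 l (n - l) q^2 - a q + b, where a = 4 ((s + X) (n - l) + (4W - 3s + X) l) and
   b = 4 ((s + X) (4W - 3s + X) - (s - X)^2).  In a cactus every cycle is
   isometric, since a shortcut between two of its vertices would close a second
   cycle through both of them; hence 4X = l^3 - l for odd l and 4X = l^3 for
   even l, which turns a and b into a_i and b_i. *)

From HB Require Import structures.
From mathcomp Require Import all_boot all_order all_algebra.
From mathcomp Require Import reals complex zify.
From mathcomp.algebra_tactics Require Import ring lra.
Set Implicit Arguments. Unset Strict Implicit. Unset Printing Implicit Defensive.
Import Order.TTheory GRing.Theory Num.Theory.

Lemma next_last (T : eqType) (x : T) s : uniq (x :: s) -> next (x :: s) (last x s) = x.
Proof. by move=> us; rewrite next_nth mem_last index_last // nth_default. Qed.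

Lemma is_cycle_cat n (e : rel 'I_n) u w (p q : seq 'I_n) :
  path e u p -> last u p = w -> path e w q -> last w q = u ->
  uniq (p ++ q) -> 3 <= size (p ++ q) -> is_cycle e (p ++ q).
Proof.
move=> pp lp pq lq upq spq; rewrite /is_cycle spq upq /=.
have : path e u (p ++ q) /\ last u (p ++ q) = u.
  by rewrite cat_path last_cat lp pp pq lq.
by case: (p ++ q) => [//|y s] /= [/andP[euy ps] lys]; rewrite rcons_path ps lys euy.
Qed.

Section GraphDistance.
Variables (n : nat) (e : rel 'I_n).

Lemma walk_of_lenP k u v :
  reflect (exists p, [/\ size p = k, path e u p & last u p = v]) (walk_of_len e k u v).
Proof.
apply: (iffP existsP) => [[p /andP[pp /eqP lp]]|[p [sp pp lp]]].
  by exists (tval p); rewrite size_tuple.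
have sp' : size p == k by apply/eqP.
by exists (Tuple sp'); rewrite /= pp lp eqxx.
Qed.

Lemma walk_of_lenS k u v w : walk_of_len e k u v -> e v w -> walk_of_len e k.+1 u w.
Proof.
case/walk_of_lenP=> p [sp pp lp] evw; apply/walk_of_lenP; exists (rcons p w).
by rewrite size_rcons sp rcons_path pp lp evw last_rcons.
Qed.

Lemma gdist_le k u v : walk_of_len e k u v -> gdist e u v <= k.
Proof.
move=> w; rewrite /gdist; have [kn|nk] := ltnP k n.
  by rewrite leqNgt; apply/negP => /(before_find 0); rewrite nth_iota // add0n w.
by apply: leq_trans (find_size _ _) _; rewrite size_iota.
Qed.

Lemma gdistxx u : gdist e u u = 0.
Proof. by apply/eqP; rewrite -leqn0 gdist_le //; apply/walk_of_lenP; exists [::]. Qed.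

Hypothesis e_sym : symmetric e.

Lemma walk_of_len_sym k u v : walk_of_len e k u v -> walk_of_len e k v u.
Proof.
case/walk_of_lenP=> p [sp pp lp]; apply/walk_of_lenP; exists (rev (belast u p)); split.
- by rewrite size_rev size_belast.
- by rewrite -lp rev_path; apply: sub_path pp => x y /=; rewrite e_sym.
- by case: p {sp pp} lp => [|y p] /= <-; rewrite ?rev_cons ?last_rcons.
Qed.

Lemma gdistC u v : gdist e u v = gdist e v u.
Proof. by apply: eq_find => k; apply/idP/idP => /walk_of_len_sym. Qed.

Hypothesis e_conn : connected_graph e.

Lemma walk_of_len_gdist u v : walk_of_len e (gdist e u v) u v.
Proof.
have [p pp ->] := connectP (e_conn u v); case: (shortenP pp) => q qq uq _.
have q_lt_n : size q < n.
  by have := max_card (mem (u :: q)); rewrite card_ord (card_uniqP uq).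
have has_w : has (fun k => walk_of_len e k u (last u q)) (iota 0 n).
  by apply/hasP; exists (size q); rewrite ?mem_iota //; apply/walk_of_lenP; exists q.
by have := nth_find 0 has_w; rewrite nth_iota ?add0n //; move: has_w; rewrite has_find size_iota.
Qed.

End GraphDistance.

Definition cycle_dist (l a b : nat) := minn (a - b + (b - a)) (l - (a - b + (b - a))).

Lemma cycle_distC l a b : cycle_dist l a b = cycle_dist l b a.
Proof. rewrite /cycle_dist; lia. Qed.

Lemma cycle_distxx l a : cycle_dist l a a = 0.
Proof. rewrite /cycle_dist; lia. Qed.

Lemma cycle_dist_triangle l a b c : a < l -> b < l -> c < l ->
  cycle_dist l a c <= cycle_dist l a b + cycle_dist l b c.
Proof. rewrite /cycle_dist; lia. Qed.

Lemma cycle_dist_succ l a : a < l -> cycle_dist l a ((a + 1) %% l) <= 1.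
Proof.
move=> al; have [a1l|a1l] := eqVneq (a + 1) l; first by rewrite a1l modnn /cycle_dist; lia.
by rewrite modn_small /cycle_dist; lia.
Qed.

Lemma sum_cdist l a : a < l ->
  \sum_(0 <= b < l) cycle_dist l a b = \sum_(0 <= k < l) minn k (l - k).
Proof.
move=> al; rewrite (@big_cat_nat _ _ _ a) ?(ltnW al) //=.
rewrite [RHS](@big_cat_nat _ _ _ (l - a)) ?leq_subr //= addnC.
congr (_ + _).
  rewrite -{1}(add0n a) big_addn.
  by apply: eq_big_nat => k /andP[_ kl]; rewrite /cycle_dist; lia.
rewrite -{1}(add0n (l - a)) big_addn subKn ?(ltnW al) //.
by apply: eq_big_nat => k /andP[_ kl]; rewrite /cycle_dist; lia.
Qed.

Lemma sum_min_sub l : 4 * \sum_(0 <= k < l) minn k (l - k) + odd l = l * l.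
Proof.
elim/ltn_ind: l => -[|[|l]] IH; [by rewrite big_geq | by rewrite big_nat1 |].
rewrite big_nat_recl // min0n add0n.
rewrite (@eq_big_nat _ _ _ 0 l.+1 _ (fun k => minn k (l - k) + 1)); last first.
  by move=> k /andP[_ kl]; lia.
rewrite big_nat_recr //= big_split /= sum_nat_const_nat subn0 muln1 /=.
by have := IH l (leqnSn _); rewrite negbK; lia.
Qed.

Section CycleWalks.
Variables (n : nat) (e : rel 'I_n) (c : seq 'I_n).
Hypothesis c_uniq : uniq c.
Local Notation l := (size c).

Lemma next_nth_mod x0 j : j < l -> next c (nth x0 c j) = nth x0 c ((j + 1) %% l).
Proof.
move=> jl; rewrite next_nth mem_nth // index_uniq //.
case: c c_uniq jl => [|y c'] //= _ jl.
have [j_lt|j_ge] := ltnP (j + 1) (size c').+1.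
  by rewrite modn_small // addn1 /=; apply: set_nth_default; lia.
have -> : j = size c' by lia.
by rewrite nth_default // addn1 modnn.
Qed.

Lemma cycle_dist_next x : x \in c -> cycle_dist l (index x c) (index (next c x) c) <= 1.
Proof.
move=> xc; have xl : index x c < l by rewrite index_mem.
rewrite -{2}(nth_index x xc) next_nth_mod // index_uniq ?ltn_pmod //.
  exact: cycle_dist_succ.
by apply: leq_ltn_trans xl.
Qed.

Hypothesis c_cycle : cycle e c.
Variable x0 : 'I_n.
Local Notation cn i := (nth x0 c i).

Lemma walk_of_len_cycle a k : a < l -> walk_of_len e k (cn a) (cn ((a + k) %% l)).
Proof.
move=> al; have l_gt0 : 0 < l by apply: leq_ltn_trans al.
elim: k => [|k IH]; first by rewrite addn0 modn_small //; apply/walk_of_lenP; exists [::].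
apply: walk_of_lenS IH _; have := next_cycle c_cycle (mem_nth x0 (ltn_pmod (a + k) l_gt0)).
by rewrite next_nth_mod ?ltn_pmod // modnDml -addnA addn1.
Qed.

Lemma gdist_cycle_le (e_sym : symmetric e) a b : a < l -> b < l ->
  gdist e (cn a) (cn b) <= cycle_dist l a b.
Proof.
wlog ab : a b / a <= b.
  move=> gen al bl; have [ab|/ltnW ba] := leqP a b; first exact: gen.
  by rewrite gdistC // cycle_distC gen.
move=> al bl; rewrite /cycle_dist (_ : a - b + (b - a) = b - a); last by lia.
rewrite leq_min; apply/andP; split; apply: gdist_le.
  by have := walk_of_len_cycle (b - a) al; rewrite subnKC // modn_small.
apply: walk_of_len_sym => //; have := walk_of_len_cycle (l - (b - a)) bl.
by rewrite (_ : b + _ = a + l) ?modnDr ?modn_small //; lia.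
Qed.

Lemma cycle_arc u w : u \in c -> w \in c -> u != w -> next c w != u ->
  exists q, [/\ path e w q, last w q = u, uniq (w :: q), {subset q <= c} & 1 < size q].
Proof.
move=> uc wc uw nwu; rewrite eq_sym in uw.
case: (rot_to_arc c_uniq wc uc uw) => i p1 p2 _ _ rot_c.
have := c_cycle; rewrite -(rot_cycle i) rot_c /= rcons_cat cat_path /= => /andP[pp1 /andP[e_last _]].
exists (rcons p1 u); split.
- by rewrite rcons_path pp1 e_last.
- by rewrite last_rcons.
- by move: c_uniq; rewrite -(rot_uniq i) rot_c -cat_rcons -cat_cons cat_uniq => /andP[].
- by move=> x xq; rewrite -(mem_rot i) rot_c -cat_rcons inE mem_cat xq orbT.
- case: p1 {pp1 e_last} rot_c => [|y p1] rot_c; last by rewrite size_rcons.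
  by move: nwu; rewrite -(next_rot i c_uniq) rot_c /= !eqxx.
Qed.

End CycleWalks.

Section CactusCycle.
Variables (n : nat) (e : rel 'I_n) (x0 : 'I_n) (c : seq 'I_n).
Hypotheses (c_uniq : uniq c) (c_cycle : cycle e c).
Hypothesis c_cactus : forall c', is_cycle e c' -> cycle_edges c != cycle_edges c' ->
  #|[set x | (x \in c) && (x \in c')]| <= 1.
Local Notation l := (size c).
Local Notation cn i := (nth x0 c i).

Lemma cactus_cycle_edges c' (u w : 'I_n) : is_cycle e c' -> u != w ->
  u \in c -> w \in c -> u \in c' -> w \in c' -> cycle_edges c = cycle_edges c'.
Proof.
move=> c'_cycle uw uc wc uc' wc'; apply/eqP/negPn; apply: contra (c_cactus c'_cycle) _.
rewrite -ltnNge; apply: leq_trans (subset_leq_card (_ : [set u; w] \subset _)).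
  by rewrite cards2 uw.
by apply/subsetP => x; rewrite !inE => /orP[] /eqP ->; apply/andP.
Qed.

Lemma cactus_bypass (u w : 'I_n) (s : seq 'I_n) : u \in c -> w \in c -> ~~ has (mem c) s ->
  path e u (rcons s w) -> [\/ u = w, w = next c u | u = next c w].
Proof.
move=> uc wc s_out pth.
have [|uw] := eqVneq u w; first by constructor 1.
have [|wnu] := eqVneq w (next c u); first by constructor 2.
have [|unw] := eqVneq u (next c w); first by constructor 3.
(* Otherwise the bypass, closed up by the arc of c from w back to u, is a
   second cycle through u and w. *)
exfalso; move: (last_rcons u s w); case: (shortenP pth) => p pp up sub_p.
have p_out x : x \in p -> x \in c -> x = w.
  move=> /sub_p; rewrite mem_rcons inE => /orP[/eqP //|xs xc].
  by case/negP: s_out; apply/hasP; exists x.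
case: p pp up {sub_p} p_out => [|q1 p] pp up p_out lp; first by rewrite -lp eqxx in uw.
have nwu : next c w != u by rewrite eq_sym.
have [A [pA lA uA sA szA]] := cycle_arc c_uniq c_cycle uc wc uw nwu.
have /andP[wA A_uniq] := uA.
set c' := (q1 :: p) ++ A.
have c'_uniq : uniq c'.
  rewrite /c' cat_uniq; apply/and3P; split => //; first by case/andP: up.
  apply/hasPn => x xA; apply/negP => /p_out /(_ (sA x xA)) xw.
  by rewrite -xw xA in wA.
have c'_cycle : is_cycle e c'.
  apply: is_cycle_cat pp lp pA lA c'_uniq _.
  by rewrite size_cat /= addSn ltnS (leq_trans szA) ?leq_addl.
have last_c' : last q1 (p ++ A) = u by rewrite last_cat -lA -lp.
have uc' : u \in c' by rewrite -last_c'; apply: mem_last.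
have wc' : w \in c' by rewrite mem_cat -lp /= mem_last.
have next_u : next c' u = q1 by rewrite -last_c'; apply: next_last.
have := cactus_cycle_edges c'_cycle uw uc wc uc' wc'.
move/setP => /(_ (u, q1)); rewrite [_ \in cycle_edges c]inE [_ \in cycle_edges c']inE.
rewrite -[(u, q1).1]/u -[(u, q1).2]/q1 uc uc' next_u eqxx /= => /orP[] /eqP q1E.
- have q1w : q1 = w by apply: p_out; rewrite ?mem_head // q1E mem_next.
  by rewrite -q1w q1E eqxx in wnu.
- have q1w : q1 = w by apply: p_out; rewrite ?mem_head // q1E mem_prev.
  by rewrite -q1w q1E (next_prev c_uniq) eqxx in nwu.
Qed.

Lemma cycle_dist_le_path u p : path e u p -> u \in c -> last u p \in c ->
  cycle_dist l (index u c) (index (last u p) c) <= size p.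
Proof.
have [k] := ubnP (size p); elim: k u p => // k IH u p le_pk pp uc lc.
have [->|p_nil] := eqVneq p [::]; first by rewrite cycle_distxx.
have has_c : has (mem c) p.
  by case: p p_nil lc {pp le_pk} => // y q _ lc; apply/hasP; exists (last y q); rewrite ?mem_last.
case: (split_find has_c) le_pk pp lc => w s1 s2 wc s1_out.
rewrite size_cat size_rcons cat_path last_cat last_rcons => le_k /andP[pp1 pp2] lc.
have uw : cycle_dist l (index u c) (index w c) <= size s1 + 1.
  apply: leq_trans (leq_addl _ _).
  case: (cactus_bypass uc wc s1_out pp1) => [->|->|->]; first by rewrite cycle_distxx.
    exact: cycle_dist_next.
  by rewrite cycle_distC; apply: cycle_dist_next.
have wv : cycle_dist l (index w c) (index (last w s2) c) <= size s2.
  apply: IH => //; move: le_k; rewrite ltnS; apply: leq_trans.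
  by rewrite addSn ltnS leq_addl.
apply: leq_trans (cycle_dist_triangle (b := index w c) _ _ _) _; rewrite ?index_mem //.
by rewrite -addn1 leq_add.
Qed.

Hypotheses (e_sym : symmetric e) (e_conn : connected_graph e).

Lemma gdist_cycle a b : a < l -> b < l -> gdist e (cn a) (cn b) = cycle_dist l a b.
Proof.
move=> al bl; apply/eqP; rewrite eqn_leq gdist_cycle_le //=.
have /walk_of_lenP[p [<- pp lp]] := walk_of_len_gdist e_conn (cn a) (cn b).
have := cycle_dist_le_path pp (mem_nth x0 al); rewrite lp !index_uniq //.
by apply; apply: mem_nth.
Qed.

Lemma sum_gdist_cycle :
  \sum_(i <- c) \sum_(j <- c) gdist e i j = l * \sum_(0 <= k < l) minn k (l - k).
Proof.
rewrite (big_nth x0) (eq_big_nat _ _ (F2 := fun=> \sum_(0 <= k < l) minn k (l - k))).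
  by rewrite sum_nat_const_nat subn0.
move=> a /andP[_ al]; rewrite (big_nth x0) -(sum_cdist al).
by apply: eq_big_nat => b /andP[_ bl]; rewrite gdist_cycle.
Qed.

Lemma sum_gdist_cycle_cube : 4 * \sum_(i <- c) \sum_(j <- c) gdist e i j + odd l * l = l ^ 3.
Proof. by rewrite sum_gdist_cycle mulnCA -[odd l * l]mulnC -mulnDr sum_min_sub. Qed.

End CactusCycle.

Lemma cactus_sum_gdist_cycle n (e : rel 'I_n) c : cactus e -> is_cycle e c ->
  4 * \sum_(i <- c) \sum_(j <- c) gdist e i j + odd (size c) * size c = size c ^ 3.
Proof.
move=> [[e_sym _] e_conn e_cactus] c_is_cycle; have /and3P[c3 c_uniq c_cycle] := c_is_cycle.
have x0 : 'I_n by case: c c3 {c_is_cycle c_uniq c_cycle} => [|x0].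
exact: (sum_gdist_cycle_cube x0 c_uniq c_cycle (e_cactus c ^~ c_is_cycle) e_sym e_conn).
Qed.

Lemma sum_sym_pairs n (F : 'I_n -> 'I_n -> nat) :
  (forall i j, F i j = F j i) -> (forall i, F i i = 0) ->
  \sum_(i < n) \sum_(j < n) F i j = (\sum_(i < n) \sum_(j < n | i < j) F i j).*2.
Proof.
move=> FC F0; rewrite -addnn.
have split_row i :
    \sum_(j < n) F i j = \sum_(j < n | i < j) F i j + \sum_(j < n | j < i) F i j.
  rewrite !(big_mkcond (fun j => _ < _)) -big_split /=; apply: eq_bigr => j _.
  by case: ltngtP => [| |/val_inj ->]; rewrite ?addn0 ?F0.
rewrite (eq_bigr _ (fun i _ => split_row i)) big_split /=; congr (_ + _).
under eq_bigr do rewrite big_mkcond; rewrite exchange_big /=.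
apply: eq_bigr => i _; rewrite [RHS]big_mkcond.
by apply: eq_bigr => j _; rewrite FC.
Qed.

Section Transmission.
Variables (n : nat) (e : rel 'I_n).

Lemma transmissionE i : transmission e i = \sum_j gdist e i j.
Proof. by rewrite [RHS](bigD1 i) //= gdistxx; apply: eq_bigl => j; rewrite eq_sym. Qed.

Lemma sum_transmission : symmetric e -> \sum_i transmission e i = (wiener e).*2.
Proof.
move=> e_sym; rewrite (eq_bigr _ (fun i _ => transmissionE i)) sum_sym_pairs //.
  exact: gdistC.
exact: gdistxx.
Qed.

End Transmission.

Local Open Scope ring_scope.

Lemma quad_form_distQ (R : realType) n (e : rel 'I_n) (x : 'rV[R]_n) :
  (x *m distQ R e *m x^T) 0 0 = \sum_i x 0 i ^+ 2 * (transmission e i)%:R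
    + \sum_i x 0 i * \sum_j x 0 j * (gdist e i j)%:R.
Proof.
rewrite /distQ mulmxDr mulmxDl mxE; congr (_ + _).
  by rewrite mul_mx_diag mxE; apply: eq_bigr => i _; rewrite !mxE; ring.
rewrite mxE; under [RHS]eq_bigr do rewrite mulr_sumr.
rewrite [RHS]exchange_big; apply: eq_bigr => j _; rewrite mxE big_distrl.
by apply: eq_bigr => i _; rewrite !mxE /= mulrAC mulrA.
Qed.

Lemma distQ_sym (R : realType) n (e : rel 'I_n) : symmetric e -> (distQ R e)^T = distQ R e.
Proof.
move=> e_sym; apply/matrixP => i j; rewrite !mxE gdistC //.
by case: (eqVneq i j) => [->|ij]; rewrite ?eqxx // eq_sym (negbTE ij).
Qed.

Section TestVector.
Variables (R : realType) (n : nat) (e : rel 'I_n) (c : seq 'I_n).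
Hypothesis c_uniq : uniq c.
Local Notation l := (size c).
Local Notation dR i j := ((gdist e i j)%:R : R).

Lemma sum_split_seq (F : 'I_n -> R) :
  \sum_i F i = \sum_(i <- c) F i + \sum_(i | i \notin c) F i.
Proof. by rewrite (bigID (mem c)) /= big_uniq. Qed.

Definition cycle_vec (a b : R) : 'rV[R]_n := \row_i (if i \in c then a else b).

Lemma sum_cycle_vec (G : R -> 'I_n -> R) a b :
  \sum_i G (cycle_vec a b 0 i) i = \sum_(i <- c) G a i + \sum_(i | i \notin c) G b i.
Proof.
rewrite sum_split_seq big_seq [X in _ = X + _]big_seq; congr (_ + _).
  by apply: eq_bigr => i ic; rewrite mxE ic.
by apply: eq_bigr => i /negbTE ic; rewrite mxE ic.
Qed.

Lemma card_notin : #|[pred i : 'I_n | i \notin c]| = (n - l)%N.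
Proof.
have : (#|c| + #|[pred i : 'I_n | i \notin c]|)%N = #|'I_n|.
  by rewrite -(cardC (mem c)); congr addn; apply: eq_card => i; rewrite !inE.
by rewrite card_ord (card_uniqP c_uniq) => /(congr1 (subn^~ l)); rewrite addKn.
Qed.

Lemma norm_cycle_vec a b :
  (cycle_vec a b *m (cycle_vec a b)^T) 0 0 = a ^+ 2 * l%:R + b ^+ 2 * (n - l)%:R.
Proof.
rewrite mxE; under eq_bigr do rewrite [_^T _ _]mxE.
rewrite (sum_cycle_vec (fun t _ => t * t)) sumr_const card_notin big_const_seq.
by rewrite count_predT iter_addr_0 !mulr_natr !expr2.
Qed.

Local Notation s := (cyc_s R e c).
Local Notation W := ((wiener e)%:R : R).
Local Notation X := (\sum_(i <- c) \sum_(j <- c) dR i j).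

Lemma quad_form_cycle_vec (e_sym : symmetric e) a b :
  (cycle_vec a b *m distQ R e *m (cycle_vec a b)^T) 0 0 =
    a ^+ 2 * (s + X) + 2 * a * b * (s - X) + b ^+ 2 * (4 * W - 3 * s + X).
Proof.
pose Y := \sum_(i <- c) \sum_(j | j \notin c) dR i j.
pose Z := \sum_(i | i \notin c) \sum_(j | j \notin c) dR i j.
have D_split i : (transmission e i)%:R = \sum_(j <- c) dR i j + \sum_(j | j \notin c) dR i j.
  by rewrite transmissionE natr_sum sum_split_seq.
have sXY : s = X + Y by rewrite /cyc_s (eq_bigr _ (fun i _ => D_split i)) big_split.
have YC : \sum_(i | i \notin c) \sum_(j <- c) dR i j = Y.
  by rewrite exchange_big; apply: eq_bigr => i _; apply: eq_bigr => j _; rewrite gdistC.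
have D_out : \sum_(i | i \notin c) (transmission e i)%:R = Y + Z.
  by rewrite (eq_bigr _ (fun i _ => D_split i)) big_split /= YC.
have WsYZ : 2 * W = s + (Y + Z).
  by rewrite -D_out /cyc_s -sum_split_seq -natr_sum sum_transmission // -mul2n natrM.
have inner i : \sum_j cycle_vec a b 0 j * dR i j =
    a * \sum_(j <- c) dR i j + b * \sum_(j | j \notin c) dR i j.
  by rewrite !mulr_sumr; exact: (sum_cycle_vec (fun t j => t * dR i j)).
rewrite quad_form_distQ (sum_cycle_vec (fun t i => t ^+ 2 * (transmission e i)%:R)).
under [T in _ + T = _]eq_bigr => i _ do rewrite inner.
rewrite [T in _ + T = _](sum_cycle_vec
  (fun t i => t * (a * \sum_(j <- c) dR i j + b * \sum_(j | j \notin c) dR i j))).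
rewrite -!mulr_sumr !big_split /= -!mulr_sumr YC -/Y -/Z D_out.
rewrite -[\sum_(i <- c) (transmission e i)%:R]/s; clearbody Y Z.
have -> : Z = 2 * W - s - Y by rewrite WsYZ; ring.
by rewrite sXY; ring.
Qed.

End TestVector.

Local Open Scope sesquilinear_scope.

Lemma unitary_dotmx (C : numClosedFieldType) n (Q : 'M[C]_n) (y : 'rV[C]_n) : Q \is unitarymx ->
  (y *m y^t*) 0 0 = \sum_i `|(y *m Q^t*) 0 i| ^+ 2.
Proof.
move=> /unitarymxP Q_unitary; set z := y *m Q^t*.
have -> : y = z *m Q by rewrite /z -mulmxA (mulmx1C Q_unitary) mulmx1.
rewrite trmx_mul map_mxM mulmxA -(mulmxA z) Q_unitary mulmx1 mxE.
by apply: eq_bigr => j _; rewrite !mxE normCK.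
Qed.

Section NormalSpectral.
Variables (C : numClosedFieldType) (n : nat) (A : 'M[C]_n).
Hypothesis A_normal : A \is normalmx.
Local Notation P := (spectralmx A).
Local Notation D := (spectral_diag A).

Let P_unitary : P *m P^t* = 1%:M.
Proof. exact/unitarymxP/spectral_unitarymx. Qed.

Let A_spectral : A = P^t* *m diag_mx D *m P.
Proof. by rewrite {1}(orthomx_spectralP A_normal) invmx_unitary ?spectral_unitarymx. Qed.

Lemma eigenvalue_spectral_diag i : eigenvalue A (D 0 i).
Proof.
apply/eigenvalueP; exists (row i P).
  rewrite -row_mul [X in P *m X]A_spectral !mulmxA P_unitary mul1mx row_mul row_diag_mx.
  by rewrite -scalemxAl -rowE.
apply/eqP => Pi0; have := congr1 (row i) P_unitary.
rewrite row_mul Pi0 mul0mx => /rowP /(_ i); rewrite !mxE eqxx => /eqP.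
by rewrite eq_sym oner_eq0.
Qed.

Lemma spectral_quad_form (y : 'rV[C]_n) :
  (y *m A *m y^t*) 0 0 = \sum_i D 0 i * `|(y *m P^t*) 0 i| ^+ 2.
Proof.
set z := y *m P^t*.
have Py : P *m y^t* = z^t* by rewrite /z trmx_mul map_mxM trmxCK.
rewrite [X in y *m X]A_spectral !mulmxA -(mulmxA _ P) Py mxE.
by apply: eq_bigr => j _; rewrite mul_mx_diag !mxE normCK mulrAC mulrC.
Qed.

End NormalSpectral.

Section RealSymmetric.
Variables (R : realType) (n : nat) (M : 'M[R]_n).
Hypothesis M_sym : M^T = M.
Local Notation toC := (real_complex R).
Local Notation Mc := (map_mx toC M).
Local Notation Re := (@complex.Re R).
Local Notation Im := (@complex.Im R).
Local Open Scope complex_scope.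

Let trmxC_real m p (B : 'M[R]_(m, p)) : (map_mx toC B)^t* = map_mx toC B^T.
Proof. by apply/matrixP => i j; rewrite !mxE; exact: conjc_real. Qed.

Let Mc_herm : Mc \is hermsymmx.
Proof. by apply/is_hermitianmxP; rewrite expr0 scale1r trmxC_real M_sym. Qed.

Let eigenvalue_complexify a : eigenvalue Mc (toC a) -> eigenvalue M a.
Proof. by rewrite !eigenvalue_root_char -map_char_poly fmorph_root. Qed.

Let quad_form_complexify (x : 'rV[R]_n) (A : 'M[R]_n) :
  toC ((x *m A *m x^T) 0 0) = (map_mx toC x *m map_mx toC A *m (map_mx toC x)^t*) 0 0.
Proof. by rewrite trmxC_real -!map_mxM [RHS]mxE. Qed.

Lemma rayleigh_decomposition (x : 'rV[R]_n) : exists d w : 'I_n -> R,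
  [/\ forall i, eigenvalue M (d i), forall i, 0 <= w i,
      (x *m M *m x^T) 0 0 = \sum_i d i * w i & (x *m x^T) 0 0 = \sum_i w i].
Proof.
have Mc_normal := hermitian_normalmx Mc_herm.
have D_real := hermitian_spectral_diag_real Mc_herm.
have DR i : toC (Re (spectral_diag Mc 0 i)) = spectral_diag Mc 0 i.
  by apply: RRe_real; apply: (mxOverP D_real).
set z := map_mx toC x *m (spectralmx Mc)^t*.
exists (fun i => Re (spectral_diag Mc 0 i)), (fun i => Re (z 0 i) ^+ 2 + Im (z 0 i) ^+ 2).
split => [i|i||].
- by apply: eigenvalue_complexify; rewrite DR eigenvalue_spectral_diag.
- by rewrite addr_ge0 ?sqr_ge0.
- apply: complexI; rewrite quad_form_complexify spectral_quad_form // rmorph_sum.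
  by apply: eq_bigr => i _; rewrite rmorphM /= DR add_Re2_Im2.
- apply: complexI; have := quad_form_complexify x 1%:M.
  rewrite !mulmx1 map_mx1 mulmx1 => ->.
  rewrite (unitary_dotmx _ (spectral_unitarymx Mc)) rmorph_sum.
  by apply: eq_bigr => i _; rewrite /= add_Re2_Im2.
Qed.

Lemma quad_form_le_largest q : is_largest_eigenvalue M q ->
  forall x : 'rV[R]_n, (x *m M *m x^T) 0 0 <= q * (x *m x^T) 0 0.
Proof.
move=> [_ q_max] x; have [d [w [d_eig w_ge0 -> ->]]] := rayleigh_decomposition x.
by rewrite mulr_sumr; apply: ler_sum => i _; rewrite ler_wpM2r ?q_max.
Qed.

Lemma quad_form_ge_least q : is_least_eigenvalue M q ->
  forall x : 'rV[R]_n, q * (x *m x^T) 0 0 <= (x *m M *m x^T) 0 0.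
Proof.
move=> [_ q_min] x; have [d [w [d_eig w_ge0 -> ->]]] := rayleigh_decomposition x.
by rewrite mulr_sumr; apply: ler_sum => i _; rewrite ler_wpM2r ?q_min.
Qed.

End RealSymmetric.

Lemma binary_form_ge0 (R : realFieldType) (P Q B : R) :
  (forall x y, 0 <= P * x ^+ 2 - 2 * B * x * y + Q * y ^+ 2) ->
  [/\ 0 <= P, 0 <= Q & B ^+ 2 <= P * Q].
Proof.
move=> H; have P_ge0 : 0 <= P by move: (H 1 0); rewrite !expr2; lra.
have Q_ge0 : 0 <= Q by move: (H 0 1); rewrite !expr2; lra.
split => //.
have : 0 <= (P + Q) * (P * Q - B ^+ 2) by move: (H B P) (H Q B); rewrite !expr2; lra.
have [PQ_gt0|PQ_le0 _] := ltP 0 (P + Q); first by rewrite pmulr_rge0 // subr_ge0.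
have [-> ->] : P = 0 /\ Q = 0 by split; lra.
by move: (H B 1); rewrite !expr2; nra.
Qed.

Lemma pencil_root_le (R : rcfType) (L N A B C a b q : R) : 0 < L -> 0 < N ->
  (forall x y, x ^+ 2 * A + 2 * x * y * B + y ^+ 2 * C <= q * (x ^+ 2 * L + y ^+ 2 * N)) ->
  a = 4 * (A * N + C * L) -> b = 4 * (A * C - B ^+ 2) ->
  (a + Num.sqrt (a ^+ 2 - 16 * b * L * N)) / (8 * L * N) <= q.
Proof.
move=> L_gt0 N_gt0 H -> ->.
have [P_ge0 Q_ge0 B_le] : [/\ 0 <= L * q - A, 0 <= N * q - C & B ^+ 2 <= (L * q - A) * (N * q - C)].
  by apply: binary_form_ge0 => x y; move: (H x y); lra.
set T := 4 * (N * (L * q - A) + L * (N * q - C)).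
have T_ge0 : 0 <= T by rewrite /T; nra.
have disc_le : (4 * (A * N + C * L)) ^+ 2 - 16 * (4 * (A * C - B ^+ 2)) * L * N <= T ^+ 2.
  rewrite -subr_ge0 (_ : _ - _ = 64 * (L * N) * ((L * q - A) * (N * q - C) - B ^+ 2)).
    by rewrite mulr_ge0 ?subr_ge0 // mulr_ge0 // ltW // mulr_gt0.
  by rewrite /T; ring.
rewrite ler_pdivrMr ?mulr_gt0 // (_ : q * _ = 4 * (A * N + C * L) + T); last by rewrite /T; ring.
by rewrite lerD2l -(ger0_norm T_ge0) -sqrtr_sqr ler_wsqrtr.
Qed.

Lemma pencil_root_ge (R : rcfType) (L N A B C a b q : R) : 0 < L -> 0 < N ->
  (forall x y, q * (x ^+ 2 * L + y ^+ 2 * N) <= x ^+ 2 * A + 2 * x * y * B + y ^+ 2 * C) ->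
  a = 4 * (A * N + C * L) -> b = 4 * (A * C - B ^+ 2) ->
  q <= (a - Num.sqrt (a ^+ 2 - 16 * b * L * N)) / (8 * L * N).
Proof.
move=> L_gt0 N_gt0 H -> ->; rewrite -lerN2 -mulNr opprB addrC.
rewrite -[(4 * _) ^+ 2]sqrrN.
apply: (pencil_root_le (A := - A) (B := - B) (C := - C)) => // [x y||]; try ring.
by move: (H x y); lra.
Qed.

Section CycleBounds.
Variables (R : realType) (n : nat) (e : rel 'I_n) (c : seq 'I_n).
Hypotheses (e_cactus : cactus e) (c_is_cycle : is_cycle e c) (c_lt_n : (size c < n)%N).
Local Notation l := (size c).
Local Notation s := (cyc_s R e c).
Local Notation W := ((wiener e)%:R : R).
Local Notation X := (\sum_(i <- c) \sum_(j <- c) ((gdist e i j)%:R : R)).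

Let X_cube : l%:R ^+ 3 = 4 * X + (odd l)%:R * l%:R.
Proof.
have := congr1 (fun k => k%:R : R) (cactus_sum_gdist_cycle e_cactus c_is_cycle).
rewrite natrX natrD !natrM => <-.
by rewrite natr_sum; under eq_bigr do rewrite natr_sum.
Qed.

Lemma coef_a_cycle :
  coef_a R e l c = 4 * ((s + X) * (n - l)%:R + (4 * W - 3 * s + X) * l%:R).
Proof. by rewrite /coef_a natrB ?(ltnW c_lt_n) //; case: (odd l) X_cube => /= ->; ring. Qed.

Lemma coef_b_cycle : coef_b R e l c = 4 * ((s + X) * (4 * W - 3 * s + X) - (s - X) ^+ 2).
Proof. by rewrite /coef_b; case: (odd l) X_cube => /= ->; ring. Qed.

Let e_sym : symmetric e. Proof. by case: e_cactus => -[]. Qed.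
Let c_uniq : uniq c. Proof. by case/and3P: c_is_cycle. Qed.
Let L_gt0 : 0 < l%:R :> R. Proof. by case/and3P: c_is_cycle => c3 _ _; rewrite ltr0n; lia. Qed.
Let N_gt0 : 0 < (n - l)%:R :> R. Proof. by rewrite ltr0n subn_gt0. Qed.

Lemma bound_plus_le q : is_largest_eigenvalue (distQ R e) q -> bound_plus R e l c <= q.
Proof.
move=> q_ext; apply: (pencil_root_le L_gt0 N_gt0 _ coef_a_cycle coef_b_cycle) => a b.
have := quad_form_le_largest (distQ_sym R e_sym) q_ext (cycle_vec c a b).
by rewrite quad_form_cycle_vec // norm_cycle_vec.
Qed.

Lemma bound_minus_ge q : is_least_eigenvalue (distQ R e) q -> q <= bound_minus R e l c.
Proof.
move=> q_ext; apply: (pencil_root_ge L_gt0 N_gt0 _ coef_a_cycle coef_b_cycle) => a b.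
have := quad_form_ge_least (distQ_sym R e_sym) q_ext (cycle_vec c a b).
by rewrite quad_form_cycle_vec // norm_cycle_vec.
Qed.

End CycleBounds.

Theorem corollary4p11 (R : realType) (n : nat) (e : rel 'I_n) (l : nat) :
  cactus e -> circumference e l -> (3 <= l)%N -> (l <= n.-1)%N ->
  (forall q : R, is_largest_eigenvalue (distQ R e) q ->
     forall c, is_cycle e c -> size c = l -> bound_plus R e l c <= q) /\
  (forall q : R, is_least_eigenvalue (distQ R e) q ->
     forall c, is_cycle e c -> size c = l -> q <= bound_minus R e l c).
Proof.
move=> e_cactus _ l_ge3 l_le_n1; have l_lt_n : (l < n)%N by lia.
split=> q q_ext c c_is_cycle c_size; subst l.
- exact: bound_plus_le.
- exact: bound_minus_ge.
Qed.
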